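(* Let $\beta=(\beta_n)_{n\ge0}$ be a sequence of positive numbers with $\liminf_n\beta_n^{1/n}\ge1$. If for some $a\in(0,1)$ the map $T_a$ induces a bounded composition operator $C_{T_a}$ on $H^2(\beta)$, then $\beta$ has a polynomial minoration.
   Context: $H^2(\beta)$ is the Hilbert space of analytic functions $f(z)=\sum_{n\ge0}a_nz^n$ on the unit disk $\mathbb D$ with $\|f\|^2=\sum_{n\ge0}|a_n|^2\beta_n<\infty$. For $a\in\mathbb D$, $T_a(z)=\frac{a+z}{1+\bar a z}$, and $C_{T_a}f=f\circ T_a$. $\beta$ has a polynomial minoration if there are constants $\delta,\alpha>0$ with $\beta_n\ge\delta n^{-\alpha}$ for all integers $n\ge1$. *)

From Stdlib Require Import Reals.
From Coquelicot Require Import Coquelicot.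
Open Scope R_scope.

Definition Ta (a : C) (z : C) : C := ((a + z) / (1 + Cconj a * z))%C.

Definition in_H2 (beta : nat -> R) (c : nat -> C) : Prop :=
  ex_series (fun n => (Cmod (c n)) ^ 2 * beta n).

Definition H2norm (beta : nat -> R) (c : nat -> C) : R :=
  sqrt (Series (fun n => (Cmod (c n)) ^ 2 * beta n)).

Definition represents (c : nat -> C) (f : C -> C) : Prop :=
  forall z : C, Cmod z < 1 -> is_pseries c z (f z).

Definition bounded_comp_Ta (beta : nat -> R) (a : C) : Prop :=
  exists M : R, forall (c : nat -> C) (f : C -> C),
    in_H2 beta c -> represents c f ->
    exists d : nat -> C, in_H2 beta d /\ represents d (fun z => f (Ta a z)) /\
      H2norm beta d <= M * H2norm beta c.

Definition poly_minoration (beta : nat -> R) : Prop :=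
  exists delta alpha : R, 0 < delta /\ 0 < alpha /\
    forall n : nat, (1 <= n)%nat -> beta n >= delta * Rpower (INR n) (- alpha).

(* Let M >= 1 bound the norm of C_{T_a}.  Then C_{T_a}^k = C_{T_a^k}
   has norm at most M^k.  Apply it to the monomial z^n, of norm sqrt(beta_n),
   and evaluate at 0: point evaluation at 0 is bounded by ||.||/sqrt(beta_0),
   so  |T_a^k(0)|^(2n) beta_0 <= M^(2k) beta_n.  For real a the orbit of 0 is
   explicit, x_k = (lam^k - 1)/(lam^k + 1) with lam = (1+a)/(1-a) > 1.  Choosing
   k <= log_lam(8n) + 1 with lam^k >= 8n gives x_k^n >= 3/4 (Bernoulli) and
   M^(2k) <= M^2 (8n)^c with c = log_lam(M^2), whence beta_n >= delta n^(-c). *)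

From Stdlib Require Import Reals Lia Lra ZArith.
From Coquelicot Require Import Coquelicot.
Open Scope R_scope.

Section SingleTerm.
Context {G : AbelianMonoid} (u : nat -> G) (n : nat).
Hypothesis u_single : forall k, k <> n -> u k = zero.

Lemma sum_n_single_before m : (m < n)%nat -> sum_n u m = zero.
Proof.
  induction m as [|m IH]; intros Hm.
  - rewrite sum_O. apply u_single. lia.
  - rewrite sum_Sn, IH, u_single by lia. apply plus_zero_l.
Qed.

Lemma sum_n_single_after m : (n <= m)%nat -> sum_n u m = u n.
Proof.
  induction m as [|m IH]; intros Hm.
  - rewrite sum_O. replace n with 0%nat by lia. reflexivity.
  - destruct (Nat.eq_dec n (S m)) as [Hn|Hn].
    + rewrite sum_Sn, sum_n_single_before, Hn by lia. apply plus_zero_l.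
    + rewrite sum_Sn, IH, (u_single (S m)) by lia. apply plus_zero_r.
Qed.
End SingleTerm.

Lemma is_series_single {K : AbsRing} {V : NormedModule K} (u : nat -> V) n :
  (forall k, k <> n -> u k = zero) -> is_series u (u n).
Proof.
  intros u_single. unfold is_series.
  apply filterlim_ext_loc with (fun _ => u n).
  - exists n. intros m Hm. symmetry. now apply sum_n_single_after.
  - apply filterlim_const.
Qed.

Lemma term_le_Series (u : nat -> R) n :
  (forall k, 0 <= u k) -> ex_series u -> u n <= Series u.
Proof.
  intros u_nonneg u_summable.
  set (v := fun k => if Nat.eqb k n then u n else 0).
  assert (v_sum : is_series v (u n)).
  { replace (u n) with (v n) by (unfold v; now rewrite Nat.eqb_refl).
    apply is_series_single. intros k Hk. unfold v.
    now rewrite (proj2 (Nat.eqb_neq k n) Hk). }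
  rewrite <- (is_series_unique _ _ v_sum).
  apply Series_le; [|exact u_summable].
  intros k. unfold v. pose proof (u_nonneg k).
  destruct (Nat.eqb_spec k n) as [->|_]; lra.
Qed.

Definition monomial (n k : nat) : C := if Nat.eqb k n then 1%C else 0%C.

Lemma represents_monomial n : represents (monomial n) (fun z => pow_n z n).
Proof.
  intros z _. unfold is_pseries.
  replace (pow_n z n) with (scal (pow_n z n) (monomial n n)).
  - apply (is_series_single (fun k => scal (pow_n z k) (monomial n k))).
    intros k Hk. unfold monomial. rewrite (proj2 (Nat.eqb_neq k n) Hk).
    exact (scal_zero_r (pow_n z k)).
  - unfold monomial. rewrite Nat.eqb_refl. apply (mult_one_r (K:=C_Ring)).
Qed.

Lemma is_series_H2_monomial beta n :
  is_series (fun k => Cmod (monomial n k) ^ 2 * beta k) (beta n).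
Proof.
  replace (beta n) with (Cmod (monomial n n) ^ 2 * beta n)
    by (unfold monomial; rewrite Nat.eqb_refl, Cmod_1; ring).
  apply (is_series_single (fun k => Cmod (monomial n k) ^ 2 * beta k)).
  intros k Hk. unfold monomial. rewrite (proj2 (Nat.eqb_neq k n) Hk), Cmod_0.
  simpl. change (zero : R) with 0. ring.
Qed.

Lemma in_H2_monomial beta n : in_H2 beta (monomial n).
Proof. exists (beta n). apply is_series_H2_monomial. Qed.

Lemma H2norm_monomial beta n : H2norm beta (monomial n) = sqrt (beta n).
Proof. unfold H2norm. now rewrite (is_series_unique _ _ (is_series_H2_monomial beta n)). Qed.

Lemma represents_at_0 (d : nat -> C) g : represents d g -> g (RtoC 0) = d 0%nat.
Proof.
  intros Hg.
  assert (H0 : Cmod (RtoC 0) < 1) by (rewrite Cmod_0; lra).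
  assert (Hconst : is_series (fun k => scal (pow_n (RtoC 0) k) (d k))
                     (scal (pow_n (RtoC 0) 0) (d 0%nat))).
  { apply (is_series_single (fun k => scal (pow_n (RtoC 0) k) (d k))).
    intros [|k] Hk; [lia|]. simpl.
    replace (mult (RtoC 0) (pow_n (RtoC 0) k)) with (zero : C_Ring)
      by (symmetry; apply (mult_zero_l (K:=C_Ring))).
    exact (scal_zero_l (d (S k))). }
  rewrite (filterlim_locally_unique _ _ _ (Hg _ H0) Hconst). apply scal_one.
Qed.

Lemma coeff_le_H2norm beta d n : (forall k, 0 <= beta k) -> in_H2 beta d ->
  Cmod (d n) ^ 2 * beta n <= H2norm beta d ^ 2.
Proof.
  intros beta_nonneg Hd.
  assert (terms_nonneg : forall k, 0 <= Cmod (d k) ^ 2 * beta k)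
    by (intros k; apply Rmult_le_pos; [apply pow2_ge_0 | apply beta_nonneg]).
  unfold H2norm. rewrite pow2_sqrt.
  - exact (term_le_Series _ n terms_nonneg Hd).
  - eapply Rle_trans; [apply (terms_nonneg n) | exact (term_le_Series _ n terms_nonneg Hd)].
Qed.

Lemma value_at_0_le_H2norm beta d g : (forall k, 0 <= beta k) ->
  in_H2 beta d -> represents d g -> Cmod (g (RtoC 0)) ^ 2 * beta 0%nat <= H2norm beta d ^ 2.
Proof.
  intros beta_nonneg Hd Hg. rewrite (represents_at_0 d g Hg).
  now apply coeff_le_H2norm.
Qed.

Definition comp_bounded_by (beta : nat -> R) (a : C) (M : R) : Prop :=
  forall (c : nat -> C) (f : C -> C), in_H2 beta c -> represents c f ->
    exists d : nat -> C, in_H2 beta d /\ represents d (fun z => f (Ta a z)) /\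
      H2norm beta d <= M * H2norm beta c.

Fixpoint iterT (a : C) (k : nat) (z : C) : C :=
  match k with O => z | S k => iterT a k (Ta a z) end.

Lemma iterT_S a k z : iterT a (S k) z = Ta a (iterT a k z).
Proof. revert z; induction k as [|k IH]; intros z; [reflexivity|]. apply IH. Qed.

Lemma comp_iterT_bounded beta a M c f : comp_bounded_by beta a M ->
  in_H2 beta c -> represents c f -> forall k, exists d : nat -> C,
    in_H2 beta d /\ represents d (fun z => f (iterT a k z)) /\
    H2norm beta d <= Rmax M 1 ^ k * H2norm beta c.
Proof.
  intros HM Hc Hf k.
  assert (M_le : M <= Rmax M 1) by apply Rmax_l.
  assert (one_le : 1 <= Rmax M 1) by apply Rmax_r.
  assert (norm_c : 0 <= H2norm beta c) by apply sqrt_pos.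
  induction k as [|k [d [Hd [Hfd Hnorm]]]].
  - exists c. split; [exact Hc|]. split; [exact Hf|]. simpl. lra.
  - destruct (HM d _ Hd Hfd) as [d' [Hd' [Hfd' Hnorm']]].
    exists d'. split; [exact Hd'|]. split; [exact Hfd'|].
    assert (norm_d : 0 <= H2norm beta d) by apply sqrt_pos.
    assert (M * H2norm beta d <= Rmax M 1 * H2norm beta d)
      by (apply Rmult_le_compat_r; lra).
    assert (Rmax M 1 * H2norm beta d <= Rmax M 1 * (Rmax M 1 ^ k * H2norm beta c))
      by (apply Rmult_le_compat_l; lra).
    simpl. lra.
Qed.

Lemma orbit_monomial_bound beta a M n k : (forall j, 0 <= beta j) ->
  comp_bounded_by beta a M ->
  Cmod (pow_n (iterT a k (RtoC 0)) n) ^ 2 * beta 0%nat <= (Rmax M 1 ^ k) ^ 2 * beta n.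
Proof.
  intros beta_nonneg HM.
  destruct (comp_iterT_bounded beta a M (monomial n) (fun z => pow_n z n) HM
              (in_H2_monomial beta n) (represents_monomial n) k) as [d [Hd [Hfd Hnorm]]].
  rewrite H2norm_monomial in Hnorm.
  eapply Rle_trans; [exact (value_at_0_le_H2norm beta d _ beta_nonneg Hd Hfd)|].
  replace ((Rmax M 1 ^ k) ^ 2 * beta n) with ((Rmax M 1 ^ k * sqrt (beta n)) ^ 2)
    by (rewrite Rpow_mult_distr, pow2_sqrt by apply beta_nonneg; ring).
  apply pow_incr. split; [apply sqrt_pos | exact Hnorm].
Qed.

(* For real a in (0,1), T_a fixes the real axis and its orbit of 0 is
   x_k = (lam^k - 1)/(lam^k + 1) with lam = (1+a)/(1-a). *)
Definition orbit (lam : R) (k : nat) : R := (lam ^ k - 1) / (lam ^ k + 1).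

Lemma Ta_real a x : 0 <= a -> 0 <= x ->
  Ta (RtoC a) (RtoC x) = RtoC ((a + x) / (1 + a * x)).
Proof.
  intros Ha Hx. unfold Ta.
  replace (Cconj (RtoC a)) with (RtoC a) by (unfold Cconj, RtoC; simpl; f_equal; ring).
  rewrite <- RtoC_mult, <- !RtoC_plus, <- RtoC_div; [reflexivity|].
  assert (0 <= a * x) by (apply Rmult_le_pos; lra). lra.
Qed.

Lemma pow_n_RtoC (x : R) n : pow_n (K:=C_Ring) (RtoC x) n = RtoC (x ^ n).
Proof. induction n as [|n IH]; [reflexivity|]. simpl. now rewrite IH, RtoC_mult. Qed.

Lemma iterT_orbit a k : 0 < a < 1 ->
  iterT (RtoC a) k (RtoC 0) = RtoC (orbit ((1 + a) / (1 - a)) k).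
Proof.
  intros Ha. set (lam := (1 + a) / (1 - a)).
  assert (lam_ge1 : 1 <= lam)
    by (unfold lam; apply (Rmult_le_reg_r (1 - a)); [lra|]; field_simplify; lra).
  induction k as [|k IH].
  - unfold orbit. simpl. f_equal. field.
  - rewrite iterT_S, IH.
    assert (HL : 1 <= lam ^ k) by (apply pow_R1_Rle; lra).
    assert (orbit_nonneg : 0 <= orbit lam k).
    { unfold orbit. apply Rmult_le_pos; [lra|]. left; apply Rinv_0_lt_compat; lra. }
    rewrite Ta_real by lra. f_equal.
    unfold orbit. simpl. set (L := lam ^ k) in *. unfold lam.
    field. split; [lra|]. split; nra.
Qed.

Lemma bernoulli_ineq h m : -1 <= h -> 1 + INR m * h <= (1 + h) ^ m.
Proof.
  intros Hh. induction m as [|m IH].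
  - simpl. lra.
  - rewrite S_INR. simpl.
    assert (0 <= INR m) by apply pos_INR.
    assert (0 <= INR m * h * h)
      by (rewrite Rmult_assoc; apply Rmult_le_pos; [lra | apply Rle_0_sqr]).
    nra.
Qed.

Lemma orbit_pow_ge lam k n : (1 <= n)%nat -> 8 * INR n <= lam ^ k ->
  3 / 4 <= orbit lam k ^ n.
Proof.
  intros Hn HL. set (N := INR n) in *.
  assert (HN : 1 <= N) by (apply (le_INR 1); exact Hn).
  set (y := 1 - / (4 * N)).
  assert (Hinv : / (4 * N) * (4 * N) = 1) by (field; lra).
  assert (inv_pos : 0 < / (4 * N)) by (apply Rinv_0_lt_compat; lra).
  assert (y_le : y <= orbit lam k).
  { unfold orbit, Rdiv. set (L := lam ^ k) in *.
    assert (0 < / (L + 1)) by (apply Rinv_0_lt_compat; lra).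
    assert (HL1 : / (L + 1) * (L + 1) = 1) by (field; lra).
    apply (Rmult_le_reg_r (L + 1)); [lra|].
    rewrite Rmult_assoc, HL1, Rmult_1_r. unfold y. nra. }
  assert (y_nonneg : 0 <= y) by (unfold y; nra).
  assert (yn_ge : 3 / 4 <= y ^ n).
  { unfold y. replace (1 - / (4 * N)) with (1 + - / (4 * N)) by ring.
    eapply Rle_trans; [|apply bernoulli_ineq; nra]. fold N. nra. }
  eapply Rle_trans; [exact yn_ge|]. apply pow_incr; lra.
Qed.

Lemma exists_power_index lam y : 1 < lam -> 1 <= y ->
  exists k : nat, y <= lam ^ k /\ INR k <= ln y / ln lam + 1.
Proof.
  intros Hlam Hy.
  assert (ln_lam : 0 < ln lam) by (rewrite <- ln_1; apply ln_increasing; lra).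
  set (r := ln y / ln lam).
  assert (r_nonneg : 0 <= r).
  { unfold r. apply Rmult_le_pos; [|left; apply Rinv_0_lt_compat; lra].
    rewrite <- ln_1. apply ln_le; lra. }
  destruct (archimed r) as [up_gt up_le].
  assert (up_nonneg : (0 <= up r)%Z) by (apply le_IZR; lra).
  exists (Z.to_nat (up r)).
  assert (Hk : INR (Z.to_nat (up r)) = IZR (up r))
    by (rewrite INR_IZR_INZ, Z2Nat.id; auto).
  split.
  - rewrite <- Rpower_pow, Hk by lra. unfold Rpower.
    rewrite <- (exp_ln y) at 1 by lra. left. apply exp_increasing.
    replace (ln y) with (r * ln lam) by (unfold r; field; lra).
    apply Rmult_lt_compat_r; lra.
  - rewrite Hk. fold r. lra.
Qed.

Lemma pow_le_of_power_index M lam y k : 1 <= M -> 1 < lam -> 1 <= y ->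
  INR k <= ln y / ln lam + 1 ->
  (M ^ k) ^ 2 <= M ^ 2 * Rpower y (ln (M ^ 2) / ln lam).
Proof.
  intros HM Hlam Hy Hk.
  assert (ln_lam : 0 < ln lam) by (rewrite <- ln_1; apply ln_increasing; lra).
  assert (HM2 : 1 <= M ^ 2) by (apply pow_R1_Rle; lra).
  rewrite <- pow_mult, Nat.mul_comm, pow_mult, <- Rpower_pow by lra.
  apply Rle_trans with (Rpower (M ^ 2) (ln y / ln lam + 1)); [apply Rle_Rpower; lra|].
  rewrite Rpower_plus, Rpower_1 by lra.
  replace (Rpower (M ^ 2) (ln y / ln lam)) with (Rpower y (ln (M ^ 2) / ln lam));
    [lra|].
  unfold Rpower. f_equal. field. lra.
Qed.

Lemma poly_minoration_of_orbit_bound (beta : nat -> R) lam M b0 :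
  (forall n, 0 <= beta n) -> 1 < lam -> 1 <= M -> 0 < b0 ->
  (forall n k, (orbit lam k ^ n) ^ 2 * b0 <= (M ^ k) ^ 2 * beta n) ->
  poly_minoration beta.
Proof.
  intros beta_nonneg Hlam HM Hb0 Hbound.
  assert (ln_lam : 0 < ln lam) by (rewrite <- ln_1; apply ln_increasing; lra).
  set (c := ln (M ^ 2) / ln lam).
  assert (c_nonneg : 0 <= c).
  { unfold c. apply Rmult_le_pos; [|left; apply Rinv_0_lt_compat; lra].
    rewrite <- ln_1. apply ln_le; [lra|]. apply pow_R1_Rle; lra. }
  assert (R8 : 0 < Rpower 8 c) by apply exp_pos.
  assert (K_pos : 0 < M ^ 2 * Rpower 8 c) by (apply Rmult_lt_0_compat; nra).
  exists (9 / 16 * b0 / (M ^ 2 * Rpower 8 c)), (c + 1).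
  split; [apply Rdiv_lt_0_compat; lra|]. split; [lra|].
  intros n Hn. set (N := INR n).
  assert (HN : 1 <= N) by (apply (le_INR 1); exact Hn).
  assert (RN : 0 < Rpower N c) by apply exp_pos.
  destruct (exists_power_index lam (8 * N)) as [k [Hk_big Hk_small]]; [lra | lra |].
  assert (orbit_sq : 9 / 16 <= (orbit lam k ^ n) ^ 2)
    by (pose proof (orbit_pow_ge lam k n Hn Hk_big); nra).
  assert (Mk_le : (M ^ k) ^ 2 <= M ^ 2 * Rpower 8 c * Rpower N c).
  { rewrite Rmult_assoc, Rpower_mult_distr by lra.
    exact (pow_le_of_power_index M lam (8 * N) k HM Hlam ltac:(lra) Hk_small). }
  assert (main : 9 / 16 * b0 <= (M ^ 2 * Rpower 8 c * Rpower N c) * beta n).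
  { apply Rle_trans with ((orbit lam k ^ n) ^ 2 * b0); [nra|].
    eapply Rle_trans; [apply Hbound|].
    apply Rmult_le_compat_r; [apply beta_nonneg | exact Mk_le]. }
  apply Rle_ge.
  apply Rle_trans with (9 / 16 * b0 / (M ^ 2 * Rpower 8 c) * Rpower N (- c)).
  - apply Rmult_le_compat_l; [left; apply Rdiv_lt_0_compat; lra|].
    apply Rle_Rpower; lra.
  - rewrite Rpower_Ropp.
    replace (9 / 16 * b0 / (M ^ 2 * Rpower 8 c) * / Rpower N c)
      with (9 / 16 * b0 / (M ^ 2 * Rpower 8 c * Rpower N c)) by (field; lra).
    apply (Rmult_le_reg_r (M ^ 2 * Rpower 8 c * Rpower N c)); [nra|].
    unfold Rdiv. rewrite Rmult_assoc, Rinv_l by nra. lra.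
Qed.

Theorem mainTheorem3 (beta : nat -> R) :
  (forall n : nat, 0 < beta n) ->
  Rbar_le (Finite 1)
    (LimInf_seq (fun n : nat => Rpower (beta (S n)) (/ INR (S n)))) ->
  (exists a : R, 0 < a < 1 /\ bounded_comp_Ta beta (RtoC a)) ->
  poly_minoration beta.
Proof.
  intros beta_pos _ [a [Ha [M HM]]].
  assert (beta_nonneg : forall n, 0 <= beta n) by (intros n; left; apply beta_pos).
  apply (poly_minoration_of_orbit_bound beta ((1 + a) / (1 - a)) (Rmax M 1) (beta 0%nat)).
  - exact beta_nonneg.
  - apply (Rmult_lt_reg_r (1 - a)); [lra|]. field_simplify; lra.
  - apply Rmax_r.
  - apply beta_pos.
  - intros n k.
    pose proof (orbit_monomial_bound beta (RtoC a) M n k beta_nonneg HM) as Hk.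
    rewrite iterT_orbit, pow_n_RtoC, Cmod_R, pow2_abs in Hk by exact Ha.
    exact Hk.
Qed.
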